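(* Let $G$ be a connected $n$-vertex connected-domishold graph that is not complete. Let $\nu_c$ be the number of inclusion-minimal connected dominating sets of $G$ and $\nu_s$ the number of minimal cutsets of $G$. Then $\nu_s\le (n-2)\nu_c$ and $\nu_c\le (n-2)\nu_s$.
   Context: A connected dominating set of a connected graph $G$ is a set $S\subseteq V(G)$ such that every vertex outside $S$ has a neighbor in $S$ and $G[S]$ is connected. $G$ is connected-domishold if there exist $w:V(G)\to\mathbb{R}_{\ge0}$, $t\in\mathbb{R}_{\ge0}$ such that for all $S\subseteq V(G)$, $\sum_{x\in S}w(x)\ge t$ iff $S$ is a connected dominating set. A cutset is a set $S\subseteq V(G)$ such that $G-S$ is disconnected; it is minimal if it contains no other cutset. *)

From Stdlib Require Import Reals.
From mathcomp Require Import all_boot.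

Set Implicit Arguments.
Unset Strict Implicit.
Unset Printing Implicit Defensive.

Definition simple_graph (T : finType) (e : rel T) : Prop :=
  symmetric e /\ irreflexive e.

(* The subgraph induced by S is connected: any two vertices of S are joined
   by a path inside S.  (The empty induced graph counts as connected.) *)
Definition induced_connected (T : finType) (e : rel T) (S : {set T}) : bool :=
  [forall x in S, forall y in S,
     connect (fun a b => [&& e a b, a \in S & b \in S]) x y].

Definition graph_connected (T : finType) (e : rel T) : bool :=
  induced_connected e [set: T].

Definition complete_graph (T : finType) (e : rel T) : bool :=
  [forall x : T, forall y : T, (x != y) ==> e x y].

Definition dominating (T : finType) (e : rel T) (S : {set T}) : bool :=
  [forall x, (x \notin S) ==> [exists y in S, e x y]].

Definition connected_dominating (T : finType) (e : rel T) (S : {set T}) : bool :=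
  dominating e S && induced_connected e S.

Definition cutset (T : finType) (e : rel T) (S : {set T}) : bool :=
  ~~ induced_connected e (~: S).

Definition connected_domishold (T : finType) (e : rel T) : Prop :=
  exists (w : T -> R) (t : R),
    (forall x, Rle R0 (w x)) /\ Rle R0 t /\
    forall S : {set T},
      (Rle t (\big[Rplus/R0]_(x in S) w x) <-> connected_dominating e S).

Definition minimal_cds_set (T : finType) (e : rel T) : {set {set T}} :=
  [set S | minset (connected_dominating e) S].

Definition minimal_cutset_set (T : finType) (e : rel T) : {set {set T}} :=
  [set S | minset (cutset e) S].

(* "S is a connected dominating set" is a threshold function, hence monotone and
   regular: trading a vertex of S for a vertex of at least the same weight
   preserves it.  Its dual "the complement of S is not a CDS" means "S contains a
   cutset"; it is again monotone and regular, and its minimal true sets are the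
   minimal cutsets.  Complements of maximal false sets of each function are the
   minimal true sets of the other.  For a monotone regular function f, a maximal
   false set F is recovered from a pair (T0, j) where j is a lightest vertex
   outside F and T0 is a minimal true subset of F + j (necessarily containing j):
   F consists of the vertices other than j that lie in T0 or are lighter than j.
   Hence #(maximal false sets) <= k * #(minimal true sets) when minimal true sets
   have at most k elements, and in a connected non-complete graph minimal
   connected dominating sets and cutsets have at most n - 2 vertices. *)

From HB Require Import structures.
From Stdlib Require Import Reals Lra.
From mathcomp Require Import all_boot zify.

Set Implicit Arguments.
Unset Strict Implicit.
Unset Printing Implicit Defensive.

Section MonotoneBooleanFunctions.

Variable T : finType.
Implicit Types (f g : {set T} -> bool) (A B S : {set T}).

Definition upward_closed f := forall A B, A \subset B -> f A -> f B.

Definition regular (le : rel T) f :=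
  forall S i j, j \in S -> i \notin S -> le j i -> f S -> f (i |: S :\ j).

Definition dual f S := ~~ f (~: S).

Lemma dualK f : dual (dual f) =1 f.
Proof. by move=> S; rewrite /dual setCK negbK. Qed.

Lemma dual_upward_closed f : upward_closed f -> upward_closed (dual f).
Proof. by move=> fU A B sAB; apply: contraNN; apply: fU; rewrite setCS. Qed.

Lemma dual_regular le f : regular le f -> regular le (dual f).
Proof.
move=> fR S i j jS iS le_ji; apply: contraNN => fS'.
have ij : i != j by apply: contraNneq iS => ->.
have -> : ~: S = i |: ~: (i |: S :\ j) :\ j.
  apply/setP => x; rewrite !inE.
  have [->|_] := eqVneq x i; first by rewrite iS.
  have [->|_] := eqVneq x j; first by rewrite jS.
  by case: (x \in S).
by apply: fR fS' => //; rewrite !inE ?eqxx // eq_sym (negbTE ij).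
Qed.

Lemma minset_upward_closure f g :
  (forall B, g B <-> exists2 A, f A & A \subset B) -> minset g =1 minset f.
Proof.
move=> gE S; apply/minsetP/minsetP => [[gS Smin] | [fS Smin]].
  have [A fA sAS] := (gE S).1 gS.
  have AS : A = S by apply: Smin sAS; apply/gE; exists A.
  split=> [|B fB sBS]; first by rewrite -AS.
  by apply: Smin sBS; apply/gE; exists B.
split=> [|B /gE [A fA sAB] sBS]; first by apply/gE; exists S.
have AS : A = S by apply: Smin fA (subset_trans sAB sBS).
by apply/eqP; rewrite eqEsubset sBS -AS.
Qed.

Lemma card_maxset_dual f :
  #|[set F | maxset (fun B => ~~ f B) F]| = #|[set S | minset (dual f) S]|.
Proof.
rewrite -(card_preimset _ (@setC_inj T)); apply: eq_card => F.
by rewrite !inE maxminset setCK.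
Qed.

Lemma card_pairs_mem (P : pred {set T}) :
  #|[set p : {set T} * T | P p.1 && (p.2 \in p.1)]| = \sum_(S | P S) #|S|.
Proof.
rewrite -sum1_card (eq_bigl (fun p : {set T} * T => P p.1 && (p.2 \in p.1))).
  rewrite -(pair_big_dep P (fun S j => j \in S) (fun _ _ => 1)).
  by under eq_bigr do rewrite sum1_card.
by move=> p; rewrite inE.
Qed.

Section Counting.

Variables (le : rel T) (f : {set T} -> bool) (k : nat).
Hypotheses (le_total : total le) (le_trans : transitive le).
Hypotheses (fU : upward_closed f) (fR : regular le f) (fT : f setT).
Hypothesis minset_card : forall S, minset f S -> #|S| <= k.

Let le_refl : reflexive le. Proof. by move=> x; case/orP: (le_total x x). Qed.

Definition lower_set (p : {set T} * T) : {set T} :=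
  [set x | (x != p.2) && ((x \in p.1) || ~~ le p.2 x)].

Lemma maxset_lower_set F : maxset (fun B => ~~ f B) F ->
  exists2 p : {set T} * T, minset f p.1 && (p.2 \in p.1) & F = lower_set p.
Proof.
move=> /maxsetP [nfF Fmax].
have [j0 j0F] : exists j0, j0 \notin F.
  apply/existsP; apply: contraNT nfF; rewrite negb_exists => /forallP FT.
  by have -> : F = setT by apply/setP => x; rewrite inE; apply/negPn/FT.
case: (extremumP (P := [pred x | x \notin F]) id le_refl le_trans le_total j0F).
move=> j /= jF jmin.
have fjF : f (j |: F).
  move: jF; apply: contraNT => /Fmax/(_ (subsetUr _ _)) <-; exact: setU11.
have [T0 mT0 sT0] := minset_exists fjF.
have fT0 := minsetp mT0.
have sT0F x : x \in T0 -> x != j -> x \in F.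
  by move=> /(subsetP sT0); rewrite !inE => /orP [/eqP ->|]; rewrite ?eqxx.
have jT0 : j \in T0.
  move: nfF; apply: contraNT => jT0; apply: fU fT0; apply/subsetP => x xT0.
  by apply: (sT0F _ xT0); apply: contraNneq jT0 => <-.
exists (T0, j); first by rewrite mT0.
apply/setP => x; rewrite !inE /=; apply/idP/andP => [xF | [xj]].
  split; first by apply: contraTneq xF => ->.
  case: (boolP (le j x)) => [le_jx|]; rewrite ?orbT // orbF.
  move: nfF; apply: contraNT => xT0; apply: fU (fR jT0 xT0 le_jx fT0).
  apply/subsetP => y; rewrite !inE => /orP [/eqP -> //| /andP [yj yT0]].
  exact: sT0F.
case/orP => [xT0|lt_jx]; first exact: sT0F.
by move: lt_jx; apply: contraNT; apply: jmin.
Qed.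

Lemma card_maxset_le :
  #|[set F | maxset (fun B => ~~ f B) F]| <= k * #|[set S | minset f S]|.
Proof.
pose pairs := [set p : {set T} * T | minset f p.1 && (p.2 \in p.1)].
apply: (@leq_trans #|lower_set @: pairs|).
  apply: subset_leq_card; apply/subsetP => F; rewrite inE.
  by case/maxset_lower_set => p pP ->; apply: imset_f; rewrite inE.
apply: leq_trans (leq_imset_card _ _) _.
rewrite card_pairs_mem mulnC -sum_nat_const.
rewrite [X in _ <= X](eq_bigl (fun S => minset f S)) => [|S]; last by rewrite inE.
exact: leq_sum minset_card.
Qed.

End Counting.

End MonotoneBooleanFunctions.

Lemma Rplus_associative : associative Rplus.
Proof. by move=> x y z; rewrite Rplus_assoc. Qed.

HB.instance Definition _ :=
  Monoid.isComLaw.Build R R0 Rplus Rplus_associative Rplus_comm Rplus_0_l.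

Section Threshold.

Variables (T : finType) (w : T -> R).
Implicit Types A B S : {set T}.
Hypothesis w_ge0 : forall x, Rle R0 (w x).

Definition weight (S : {set T}) := \big[Rplus/R0]_(x in S) w x.

Definition weight_le : rel T := fun x y => Rle_dec (w x) (w y).

Lemma weight_leP x y : reflect (Rle (w x) (w y)) (weight_le x y).
Proof. exact: sumboolP. Qed.

Lemma weight_le_total : total weight_le.
Proof.
move=> x y; case: (Rle_dec (w x) (w y)) => [/weight_leP -> //|/Rnot_le_lt lt_yx].
by apply/orP; right; apply/weight_leP; lra.
Qed.

Lemma weight_le_trans : transitive weight_le.
Proof. by move=> y x z /weight_leP le_xy /weight_leP le_yz; apply/weight_leP; lra. Qed.

Lemma weight_subset A B : A \subset B -> Rle (weight A) (weight B).
Proof.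
move=> sAB; rewrite /weight (big_setID A (A := B)) /= (setIidPr sAB).
have : Rle R0 (\big[Rplus/R0]_(x in B :\: A) w x).
  by apply: (big_ind (Rle R0)) => // *; lra.
lra.
Qed.

Lemma weight_swap S i j : j \in S -> i \notin S ->
  weight (i |: S :\ j) = Rplus (Rminus (weight S) (w j)) (w i).
Proof.
move=> jS iS; rewrite /weight big_setU1 ?inE ?negb_and ?iS ?orbT //=.
rewrite (big_setD1 _ jS) /=; lra.
Qed.

Variables (t : R) (f : {set T} -> bool).
Hypothesis f_threshold : forall S, Rle t (weight S) <-> f S.

Lemma threshold_upward_closed : upward_closed f.
Proof.
move=> A B /weight_subset le_AB /f_threshold fA; apply/f_threshold; lra.
Qed.

Lemma threshold_regular : regular weight_le f.
Proof.
move=> S i j jS iS /weight_leP le_ji /f_threshold fS; apply/f_threshold.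
rewrite weight_swap //; lra.
Qed.

End Threshold.

Section Connect.

Variables (T : finType) (r : rel T).

Lemma connect_exit (K : {set T}) a b : connect r a b -> a \in K -> b \notin K ->
  exists u v, [/\ u \in K, v \notin K & r u v].
Proof.
move=> /connectP [p path_p ->] {b}; elim: p a path_p => [|v p IHp] a /=.
  by move=> _ ->.
case/andP=> r_av path_p aK; case: (boolP (v \in K)) => [vK | vK _]; first exact: IHp.
by exists a, v.
Qed.

Lemma connect_restrict (r' : rel T) a :
  (forall u v, connect r a u -> r u v -> r' u v) ->
  forall b, connect r a b -> connect r' a b.
Proof.
move=> rr' b /connectP [p path_p ->].
suff: forall u, connect r a u -> connect r' a u -> path r u p -> connect r' a (last u p).
  by apply; rewrite ?connect0.
elim: p {path_p} => [|v p IHp] u c_au c'_au //= /andP [r_uv]; apply: IHp.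
  exact: connect_trans c_au (connect1 r_uv).
exact: connect_trans c'_au (connect1 (rr' _ _ c_au r_uv)).
Qed.

End Connect.

Section Graph.

Variables (T : finType) (e : rel T).
Hypothesis e_simple : simple_graph e.
Implicit Types (A C S : {set T}).

Definition induced S : rel T := fun a b => [&& e a b, a \in S & b \in S].

Lemma induced_connectedP S :
  reflect {in S &, forall x y, connect (induced S) x y} (induced_connected e S).
Proof.
apply: (iffP forall_inP) => [conn x y xS yS | conn x xS].
  by move/forall_inP: (conn x xS); apply.
by apply/forall_inP => y yS; apply: conn.
Qed.

Lemma induced_connect_sym S : connect_sym (induced S).
Proof.
apply: sym_connect_sym => x y; rewrite /induced (proj1 e_simple).
by case: (x \in S); case: (y \in S); rewrite ?andbT ?andbF.
Qed.

Lemma induced_connect_mem S a b : a \in S -> connect (induced S) a b -> b \in S.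
Proof.
move=> aS /connectP [p path_p ->] {b}; elim: p a aS path_p => //= v p IHp a _.
by case/andP=> /and3P [_ _ vS]; apply: IHp.
Qed.

Lemma induced_connect_subset A S : A \subset S ->
  subrel (connect (induced A)) (connect (induced S)).
Proof.
move=> sAS; apply: connect_sub => x y /and3P [exy xA yA]; apply: connect1.
by rewrite /induced exy !(subsetP sAS).
Qed.

Lemma induced_neighbour S x y : connect (induced S) x y -> x != y ->
  exists2 v, v \in S :\ x & e x v.
Proof.
move=> c_xy xy; have y_x : y \notin [set x] by rewrite inE eq_sym.
have [_ [v [/set1P -> vx /and3P [exv _ vS]]]] := connect_exit c_xy (set11 x) y_x.
by exists v; rewrite // !inE vS andbT; move: vx; rewrite inE.
Qed.

Lemma neighbourhood_cutset x q : x != q -> ~~ e x q -> cutset e [set y | e x y].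
Proof.
move=> xq nexq; apply/induced_connectedP => conn.
have xC : x \in ~: [set y | e x y] by rewrite !inE (proj2 e_simple).
have qC : q \in ~: [set y | e x y] by rewrite !inE.
have [v] := induced_neighbour (conn x q xC qC) xq.
by rewrite !inE => /andP [_ /negbTE ->].
Qed.

Lemma cutset_card C : cutset e C -> #|C| <= #|T| - 2.
Proof.
move=> /forall_inPn [p pC /forall_inPn [q qC npq]].
have pq : p != q by apply: contraNneq npq => ->; exact: connect0.
have : 1 < #|~: C| by apply/card_gt1P; exists p, q.
have := cardsC C; lia.
Qed.

Lemma noncomplete_nonadjacent : ~ complete_graph e -> exists x y, x != y /\ ~~ e x y.
Proof.
move/negP; rewrite negb_forall => /existsP [x]; rewrite negb_forall => /existsP [y].
by rewrite negb_imply => /andP [xy nexy]; exists x, y.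
Qed.

Lemma connected_noncomplete_card : graph_connected e -> ~ complete_graph e -> 2 < #|T|.
Proof.
move=> conn /noncomplete_nonadjacent [x [q [xq nexq]]].
have cut := neighbourhood_cutset xq nexq.
have : 0 < #|[set y | e x y]|.
  by rewrite card_gt0; apply: contraTneq cut => ->; rewrite /cutset setC0 negbK.
have := cutset_card cut; lia.
Qed.

Lemma cds_complement_connected S C :
  connected_dominating e S -> C \subset ~: S -> induced_connected e (~: C).
Proof.
move=> /andP [dS /induced_connectedP cS]; rewrite subsetC => sSC.
have toS u : u \in ~: C -> exists2 s, s \in S & connect (induced (~: C)) u s.
  move=> uC; case: (boolP (u \in S)) => [uS | uS]; first by exists u.
  move/forallP/(_ u)/implyP/(_ uS)/exists_inP: dS => [s sS eus].
  by exists s => //; apply: connect1; rewrite /induced eus uC (subsetP sSC).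
apply/induced_connectedP => p q pC qC.
have [sp spS c_p] := toS p pC; have [sq sqS c_q] := toS q qC.
rewrite induced_connect_sym in c_q; apply: connect_trans c_p (connect_trans _ c_q).
exact: induced_connect_subset sSC _ _ (cS _ _ spS sqS).
Qed.

Lemma not_cds_cutset S : ~ complete_graph e ->
  ~~ connected_dominating e S -> exists2 C, cutset e C & C \subset ~: S.
Proof.
move=> ncomp; rewrite negb_and; case: (boolP (dominating e S)) => /= dS.
  by move=> ncS; exists (~: S); rewrite // /cutset setCK.
move=> _; move: dS; rewrite negb_forall => /existsP [x].
rewrite negb_imply negb_exists => /andP [xS /forallP nbx].
have sNS : [set y | e x y] \subset ~: S.
  by apply/subsetP => y; rewrite !inE => exy; move: (nbx y); rewrite exy andbT.
case: (set_0Vmem S) => [S0 | [s sS]].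
  have [x0 [q [x0q nex0q]]] := noncomplete_nonadjacent ncomp.
  by exists [set y | e x0 y]; rewrite ?S0 ?setC0 ?subsetT ?(neighbourhood_cutset x0q).
exists [set y | e x y] => //; apply: (neighbourhood_cutset (q := s)).
  by apply: contraNneq xS => ->.
by move: (nbx s); rewrite sS.
Qed.

Section NonCutVertex.

Variables (S : {set T}) (a : T).
Hypotheses (S_conn : induced_connected e S) (aS : a \in S).

Let comp x := [set y | connect (induced (S :\ x)) a y].

Lemma comp_subset x : x \in S :\ a -> comp x \subset S :\ x.
Proof.
rewrite !inE => /andP [xa _]; apply/subsetP => y; rewrite inE.
by apply: induced_connect_mem; rewrite !inE aS eq_sym xa.
Qed.

Lemma comp_proper x y : x \in S :\ a -> y \in S :\ x -> y \notin comp x ->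
  comp x \proper comp y.
Proof.
move=> xSa ySx yK; have sKSx := subsetP (comp_subset xSa).
have Ky u : u \in comp x -> u \in S :\ y.
  move=> uK; rewrite in_setD1 andbC; move/sKSx: (uK); rewrite in_setD1 => /andP [_ ->].
  by apply: contraNneq yK => <-.
have sKK : comp x \subset comp y.
  apply/subsetP => u; rewrite !inE; apply: connect_restrict => u' v c_au' ind_u'v.
  have vK : v \in comp x by rewrite inE (connect_trans c_au' (connect1 ind_u'v)).
  by case/and3P: ind_u'v => eu'v _ _; rewrite /induced eu'v !Ky // inE.
have xK : x \notin comp x by apply/negP => /sKSx; rewrite !inE eqxx.
apply/properP; split => //; exists x => //.
move: xSa ySx; rewrite !in_setD1 => /andP [_ xS] /andP [yx _].
have /induced_connectedP conn := S_conn.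
have aK : a \in comp x by rewrite inE connect0.
have [u [v [uK vK /and3P [euv _ vS]]]] := connect_exit (conn a x aS xS) aK xK.
have vx : v = x.
  have uSx := sKSx u uK.
  apply/eqP; apply: contraNT vK => vx; move: uK; rewrite !inE => /connect_trans -> //.
  apply: connect1.
  by rewrite /induced euv uSx in_setD1 vx.
have uSy := Ky u uK.
move/(subsetP sKK): uK; rewrite -vx !inE => /connect_trans -> //; apply: connect1.
by rewrite /induced euv uSy in_setD1 vS vx eq_sym yx.
Qed.

Lemma exists_noncut_vertex : 1 < #|S| ->
  exists2 x, x \in S :\ a & induced_connected e (S :\ x).
Proof.
move=> S2; have [x1 x1Sa] : exists x1, x1 \in S :\ a.
  by apply/card_gt0P; move: S2; rewrite (cardsD1 a) aS.
case: (@arg_maxnP _ x1 (fun x => x \in S :\ a) (fun x => #|comp x|) x1Sa) => x xSa xmax.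
exists x => //.
have sSK : S :\ x \subset comp x.
  apply/subsetP => y ySx; apply/negPn/negP => yK.
  have ySa : y \in S :\ a.
    move: (ySx); rewrite !in_setD1 => /andP [_ ->]; rewrite andbT.
    by apply: contraNneq yK => ->; rewrite inE connect0.
  by have := xmax y ySa; rewrite /= leqNgt (proper_card (comp_proper xSa ySx yK)).
apply/induced_connectedP => u v /(subsetP sSK) + /(subsetP sSK); rewrite !inE => c_au c_av.
by rewrite induced_connect_sym in c_au; apply: connect_trans c_au c_av.
Qed.

End NonCutVertex.

Lemma minimal_cds_card : graph_connected e -> ~ complete_graph e ->
  forall S, minset (connected_dominating e) S -> #|S| <= #|T| - 2.
Proof.
move=> conn ncomp S /minsetP [cdsS Smin]; have /andP [dS cS] := cdsS.
have n3 := connected_noncomplete_card conn ncomp.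
rewrite leqNgt; apply/negP => big.
have /card_le1_eqP outS1 : #|~: S| <= 1 by have := cardsC S; lia.
have [a aS a_adj] : exists2 a, a \in S & {in ~: S, forall u, e u a}.
  case: (set_0Vmem (~: S)) => [SC0 | [v vSC]].
    have [a aS] : exists a, a \in S by apply/card_gt0P; lia.
    by exists a => // u; rewrite SC0 inE.
  have /exists_inP [a aS eva] : [exists y in S, e v y].
    by move: vSC; rewrite inE; apply/implyP/(forallP dS).
  by exists a => // u uSC; rewrite -(outS1 u v uSC vSC).
have S2 : 1 < #|S| by lia.
have [x xSa cx] := exists_noncut_vertex cS aS S2.
move: (xSa); rewrite in_setD1 => /andP [xa xS].
suff cds' : connected_dominating e (S :\ x).
  by move/setP/(_ x): (Smin _ cds' (subD1set S x)); rewrite !inE eqxx xS.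
rewrite /connected_dominating cx andbT; apply/forallP => u; apply/implyP.
rewrite in_setD1 negb_and negbK => /orP [/eqP -> | uS]; apply/exists_inP.
  have /induced_connectedP S_conn := cS.
  exact: induced_neighbour (S_conn x a xS aS) xa.
by exists a; [rewrite in_setD1 eq_sym xa | apply: a_adj; rewrite inE].
Qed.

Lemma dual_cds_cutset : ~ complete_graph e ->
  forall B, dual (connected_dominating e) B <-> exists2 C, cutset e C & C \subset B.
Proof.
move=> ncomp B; split => [/(not_cds_cutset ncomp) [C cutC] | [C cutC sCB]].
  by rewrite setCK; exists C.
apply/negP => cds; move: cutC; rewrite /cutset (cds_complement_connected cds) //.
by rewrite setCK.
Qed.

End Graph.

Theorem mainTheorem15 (T : finType) (e : rel T) :
  simple_graph e ->
  graph_connected e ->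
  connected_domishold e ->
  ~ complete_graph e ->
  let n := #|T| in
  let nu_c := #|minimal_cds_set e| in
  let nu_s := #|minimal_cutset_set e| in
  (nu_s <= (n - 2) * nu_c)%N /\ (nu_c <= (n - 2) * nu_s)%N.
Proof.
move=> e_simple conn [w [t [w_ge0 [_ thr]]]] ncomp n nu_c nu_s.
pose f := connected_dominating e.
have fU : upward_closed f := threshold_upward_closed w_ge0 thr.
have fR : regular (weight_le w) f := threshold_regular thr.
have le_tot := @weight_le_total _ w; have le_tr := @weight_le_trans _ w.
have fT : f setT by apply/andP; split => //; apply/forallP => x; rewrite inE.
have [x0 _] := noncomplete_nonadjacent ncomp.
have gT : dual f setT.
  rewrite /dual setCT; apply/negP => /andP [/forallP /(_ x0) /implyP].
  by rewrite inE => /(_ isT) /exists_inP [y]; rewrite inE.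
have gmin : minset (dual f) =1 minset (cutset e) :=
  minset_upward_closure (dual_cds_cutset e_simple ncomp).
have nu_sE : nu_s = #|[set S | minset (dual f) S]| by apply: eq_card => S; rewrite !inE gmin.
have nu_cE : nu_c = #|[set S | minset (dual (dual f)) S]|.
  by apply: eq_card => S; rewrite !inE (minset_eq _ (dualK f)).
have cut_card S : minset (dual f) S -> #|S| <= n - 2 by rewrite gmin => /minsetp /cutset_card.
split.
  rewrite nu_sE -card_maxset_dual.
  exact: card_maxset_le le_tot le_tr fU fR fT (minimal_cds_card e_simple conn ncomp).
rewrite nu_cE -card_maxset_dual nu_sE.
exact: card_maxset_le le_tot le_tr (dual_upward_closed fU) (dual_regular fR) gT cut_card.
Qed.
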